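(* Let $I$ be a finite set of products, each $i\in I$ having a real (positive or negative) unit profit $up(i)$, and let $D=\{T_1,\dots,T_n\}$ be a database of transactions, where each transaction $T_c$ is a subset of $I$ with a positive purchase quantity $q(i,T_c)$ for each $i\in T_c$, and is assigned a time period $pe(T_c)$. Let $\prec$ be the total order on $I$ described in the context, and consider the set-enumeration tree over $I$ with respect to $\prec$, in which the children of a node $X\subseteq I$ are the sets $Y=X\cup\{z\}$ with $z\in I\setminus X$ and $x\prec z$ for all $x\in X$. Then for every node $X$, every child $Y$ of $X$, and every time period $h$, $$p(Y,h)\le pp(X,h)+rpp(X,h),$$ and over the whole database $$p(Y)\le pp(X)+rpp(X).$$
   Context: The profit of $i$ in $T_c$ is $p(i,T_c)=up(i)\cdot q(i,T_c)$; for $X\subseteq T_c$, $p(X,T_c)=\sum_{i\in X}p(i,T_c)$. The profit of $X$ in period $h$ is $p(X,h)=\sum_{T_c\in D,\ X\subseteq T_c,\ pe(T_c)=h}p(X,T_c)$, and $p(X)=\sum_{T_c\in D,\ X\subseteq T_c}p(X,T_c)$. The redefined transaction profit is $rtp(T_c)=\sum_{i\in T_c,\ p(i,T_c)>0}p(i,T_c)$ and $RTWU(X)=\sum_{T_c\in D,\ X\subseteq T_c}rtp(T_c)$. The total order $\prec$ sorts products by ascending $RTWU(\{i\})$, with every product of negative unit profit placed after all products of positive unit profit. For $X\subseteq T_c$: the positive profit $pp(X,T_c)$ is the sum of the nonnegative values $p(i,T_c)$, $i\in X$; the negative profit $np(X,T_c)$ is the sum of the negative values $p(i,T_c)$, $i\in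 X$ (so $p(X,T_c)=pp(X,T_c)+np(X,T_c)$); the remaining positive profit is $rpp(X,T_c)=\sum\{p(i,T_c): i\in T_c\setminus X,\ x\prec i \text{ for all } x\in X,\ p(i,T_c)\ge 0\}$. Then $pp(X,h)$, $rpp(X,h)$ are the sums of $pp(X,T_c)$, $rpp(X,T_c)$ over transactions $T_c\supseteq X$ with $pe(T_c)=h$, and $pp(X)$, $rpp(X)$ are the corresponding sums over all transactions $T_c\supseteq X$ in $D$. *)

From mathcomp Require Import all_boot all_order all_algebra.
Set Implicit Arguments. Unset Strict Implicit. Unset Printing Implicit Defensive.
Import Order.TTheory GRing.Theory Num.Theory.
Local Open Scope ring_scope.

(* Database: products form a finite type I; transactions are indexed by 'I_n;
   T c : {set I} is the itemset of transaction c, q c i its purchase quantity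
   of product i, pe c its period; up i is the unit profit of i. *)

Section Profits.
Variables (I : finType) (R : realFieldType) (n : nat).

Definition pI (up : I -> R) (T : 'I_n -> {set I}) (q : 'I_n -> I -> R)
  (i : I) (c : 'I_n) : R := up i * q c i.
Definition pXT (up : I -> R) (T : 'I_n -> {set I}) (q : 'I_n -> I -> R) (X : {set I}) (c : 'I_n) : R := \sum_(i in X) pI up T q i c.
Definition pXh (up : I -> R) (T : 'I_n -> {set I}) (q : 'I_n -> I -> R) (pe : 'I_n -> nat) (X : {set I}) (h : nat) : R :=
  \sum_(c < n | (X \subset T c) && (pe c == h)) pXT up T q X c.
Definition pX (up : I -> R) (T : 'I_n -> {set I}) (q : 'I_n -> I -> R) (X : {set I}) : R :=
  \sum_(c < n | X \subset T c) pXT up T q X c.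
Definition rtp (up : I -> R) (T : 'I_n -> {set I}) (q : 'I_n -> I -> R) (c : 'I_n) : R :=
  \sum_(i in T c | 0 < pI up T q i c) pI up T q i c.
Definition RTWU (up : I -> R) (T : 'I_n -> {set I}) (q : 'I_n -> I -> R) (X : {set I}) : R :=
  \sum_(c < n | X \subset T c) rtp up T q c.
Definition ppT (up : I -> R) (T : 'I_n -> {set I}) (q : 'I_n -> I -> R) (X : {set I}) (c : 'I_n) : R :=
  \sum_(i in X | 0 <= pI up T q i c) pI up T q i c.
(* rpp(X,T_c), w.r.t. the order ord (ord x i means x ≺ i) *)
Definition rppT (up : I -> R) (T : 'I_n -> {set I}) (q : 'I_n -> I -> R) (ord : rel I) (X : {set I}) (c : 'I_n) : R :=
  \sum_(i in T c :\: X | [forall x in X, ord x i] && (0 <= pI up T q i c))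
     pI up T q i c.
Definition pph (up : I -> R) (T : 'I_n -> {set I}) (q : 'I_n -> I -> R) (pe : 'I_n -> nat) (X : {set I}) (h : nat) : R :=
  \sum_(c < n | (X \subset T c) && (pe c == h)) ppT up T q X c.
Definition rpph (up : I -> R) (T : 'I_n -> {set I}) (q : 'I_n -> I -> R) (ord : rel I) (pe : 'I_n -> nat) (X : {set I}) (h : nat) : R :=
  \sum_(c < n | (X \subset T c) && (pe c == h)) rppT up T q ord X c.
Definition ppX (up : I -> R) (T : 'I_n -> {set I}) (q : 'I_n -> I -> R) (X : {set I}) : R :=
  \sum_(c < n | X \subset T c) ppT up T q X c.
Definition rppX (up : I -> R) (T : 'I_n -> {set I}) (q : 'I_n -> I -> R) (ord : rel I) (X : {set I}) : R :=
  \sum_(c < n | X \subset T c) rppT up T q ord X c.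

Definition processing_order (up : I -> R) (T : 'I_n -> {set I}) (q : 'I_n -> I -> R) (ord : rel I) : Prop :=
  [/\ (forall i, ~~ ord i i),
      (forall i j k, ord i j -> ord j k -> ord i k),
      (forall i j, i != j -> ord i j || ord j i),
      (forall i j, 0 < up i -> up j < 0 -> ord i j) &
      (forall i j, (up i < 0) = (up j < 0) ->
         RTWU up T q [set i] < RTWU up T q [set j] -> ord i j)].
End Profits.

Definition is_child (I : finType) (ord : rel I) (X Y : {set I}) : Prop :=
  exists z, [/\ z \notin X, (forall x, x \in X -> ord x z) & Y = z |: X].

From mathcomp Require Import all_boot all_order all_algebra.
Import Order.TTheory GRing.Theory Num.Theory.
Local Open Scope ring_scope.

(* In a transaction containing Y = z |: X, the profit of Y splits as
   p(X, T_c) + p(z, T_c).  Dropping the negative terms of p(X, T_c) bounds it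
   by pp(X, T_c); and p(z, T_c) is either negative, or a nonnegative term of
   rpp(X, T_c), because z comes after every element of X.  Summing over the
   transactions containing Y, which all contain X, and using that pp and rpp
   are nonnegative, gives both inequalities. *)

Section NonnegativeSums.
Variables (R : realDomainType) (J : Type).

Lemma ler_sum_filter_ge0 (r : seq J) (P : pred J) (F : J -> R) :
  \sum_(j <- r | P j) F j <= \sum_(j <- r | P j && (0 <= F j)) F j.
Proof.
rewrite big_mkcondr /=; apply: ler_sum => j _.
by case: (leP 0 (F j)) => // /ltW.
Qed.

Lemma ler_sum_widen (r : seq J) (P Q : pred J) (F G : J -> R) :
  (forall j, P j -> Q j) -> (forall j, P j -> F j <= G j) ->
  (forall j, Q j -> 0 <= G j) ->
  \sum_(j <- r | P j) F j <= \sum_(j <- r | Q j) G j.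
Proof.
move=> sPQ leFG G_ge0; rewrite big_mkcond [leRHS]big_mkcond /=.
apply: ler_sum => j _; case: ifPn => [Pj | _]; first by rewrite sPQ ?leFG.
by case: ifP => // /G_ge0.
Qed.

End NonnegativeSums.

Section TransactionProfits.
Variables (I : finType) (R : realFieldType) (n : nat).
Variables (up : I -> R) (T : 'I_n -> {set I}) (q : 'I_n -> I -> R).
Variable ord : rel I.

Lemma ppT_ge0 (X : {set I}) c : 0 <= ppT up T q X c.
Proof. by apply: sumr_ge0 => i /andP[]. Qed.

Lemma rppT_ge0 (X : {set I}) c : 0 <= rppT up T q ord X c.
Proof. by apply: sumr_ge0 => i /andP[_ /andP[]]. Qed.

Lemma pXT_le_ppT (X : {set I}) c : pXT up T q X c <= ppT up T q X c.
Proof. exact: ler_sum_filter_ge0. Qed.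

Lemma pI_le_rppT (X : {set I}) z c :
  z \in T c -> z \notin X -> (forall x, x \in X -> ord x z) ->
  pI up T q z c <= rppT up T q ord X c.
Proof.
move=> zT zX ordXz; have [pz_ge0 | pz_lt0] := leP 0 (pI up T q z c); last first.
  exact: le_trans (ltW pz_lt0) (rppT_ge0 _ _).
rewrite /rppT (bigD1 z) /=; last first.
  by rewrite in_setD zX zT pz_ge0 /= andbT; apply/forall_inP => x /ordXz.
by rewrite lerDl; apply: sumr_ge0 => i /andP[/andP[_ /andP[]]].
Qed.

Lemma pXT_setU1_le (X : {set I}) z c :
  z \in T c -> z \notin X -> (forall x, x \in X -> ord x z) ->
  pXT up T q (z |: X) c <= ppT up T q X c + rppT up T q ord X c.
Proof.
move=> zT zX ordXz; rewrite /pXT big_setU1 //= addrC.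
by apply: lerD; [exact: pXT_le_ppT | exact: pI_le_rppT].
Qed.

End TransactionProfits.

Theorem lemma2 (I : finType) (R : realFieldType) (n : nat)
  (up : I -> R) (T : 'I_n -> {set I}) (q : 'I_n -> I -> R) (pe : 'I_n -> nat)
  (ord : rel I) :
  (forall i, up i != 0) ->
  (forall c i, i \in T c -> 0 < q c i) ->
  processing_order up T q ord ->
  forall X Y : {set I}, is_child ord X Y ->
    (forall h : nat,
       pXh up T q pe Y h <= pph up T q pe X h + rpph up T q ord pe X h)
    /\ pX up T q Y <= ppX up T q X + rppX up T q ord X.
Proof.
move=> _ _ _ X Y [z [zX ordXz ->]].
have sub_X c : z |: X \subset T c -> X \subset T c.
  exact/subset_trans/subsetUr.
have le_child c : z |: X \subset T c ->
    pXT up T q (z |: X) c <= ppT up T q X c + rppT up T q ord X c.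
  by move=> sub; apply: pXT_setU1_le => //; apply: (subsetP sub); rewrite setU11.
have bound_ge0 c : 0 <= ppT up T q X c + rppT up T q ord X c.
  by rewrite addr_ge0 ?ppT_ge0 ?rppT_ge0.
split => [h|]; rewrite -big_split; apply: ler_sum_widen => [c|c|c _].
- by case/andP => /sub_X -> ->.
- by case/andP => /le_child.
- exact: bound_ge0.
- exact: sub_X.
- exact: le_child.
- exact: bound_ge0.
Qed.
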